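(* Let $d>2$ be even and $n\ge2$. There is no polynomial $\varphi$ in the coefficients of $f\in\mathbb R[x]_d$ such that $\varphi(f)>0$ for every $f$ in the interior of $P_{n,d}$ and $\varphi(f)=0$ for every $f$ on the boundary of $P_{n,d}$. Consequently, $-\log\varphi(f)$ cannot be a barrier function for $P_{n,d}$ with $\varphi$ a polynomial, and $P_{n,d}$ is not representable by a linear matrix inequality: there is no symmetric matrix pencil $L(f)=\sum_{\alpha\in\mathbb N^n,|\alpha|=d}f_\alpha A_\alpha$ (with $f(x)=\sum_\alpha f_\alpha x^\alpha$ and constant real symmetric matrices $A_\alpha$) such that $P_{n,d}=\{f\in\mathbb R[x]_d: L(f)\succeq0\}$ and $L(f)\succ0$ for all $f$ in the interior of $P_{n,d}$.
   Context: $x=(x_1,\dots,x_n)$; $\mathbb R[x]_d$ is the space of real forms of degree $d$ in $x$, identified with its coefficient vectors $(f_\alpha)_{|\alpha|=d}$. $P_{n,d}=\{f\in\mathbb R[x]_d: f(u)\ge0\ \forall u\in\mathbb R^n\}$; interior and boundary are in the Euclidean topology. A barrier function is a function tending to $+\infty$ at the boundary, here of the form $-\log\varphi$ with $\varphi>0$ on the interior and $\varphi=0$ on the boundary. *)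

From mathcomp Require Import all_boot.
From Stdlib Require Import Reals.

Set Implicit Arguments.
Unset Strict Implicit.
Unset Printing Implicit Defensive.

(* Exponent vectors alpha in N^n with |alpha| = d (each alpha_i <= d). *)
Definition mon (n d : nat) : finType :=
  {a : {ffun 'I_n -> 'I_d.+1} | (\sum_(i : 'I_n) (a i : nat))%N == d}.

Definition mexp n d (a : mon n d) (i : 'I_n) : nat := nat_of_ord (sval a i).

(* R[x]_d identified with coefficient vectors (f_alpha)_{|alpha| = d}. *)
Definition form (n d : nat) := mon n d -> R.

Definition eval_form n d (f : form n d) (u : 'I_n -> R) : R :=
  \big[Rplus/0%R]_(a : mon n d)
     Rmult (f a) (\big[Rmult/1%R]_(i : 'I_n) pow (u i) (mexp a i)).

Definition Pnd n d (f : form n d) : Prop :=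
  forall u : 'I_n -> R, (0 <= eval_form f u)%R.

Definition dist_form n d (f g : form n d) : R :=
  sqrt (\big[Rplus/0%R]_(a : mon n d) pow (f a - g a)%R 2).

Definition f_interior n d (S : form n d -> Prop) (f : form n d) : Prop :=
  exists eps : R, (0 < eps)%R /\
    forall g : form n d, (dist_form f g < eps)%R -> S g.

Definition f_closure n d (S : form n d -> Prop) (f : form n d) : Prop :=
  forall eps : R, (0 < eps)%R ->
    exists g : form n d, S g /\ (dist_form f g < eps)%R.

Definition f_boundary n d (S : form n d -> Prop) (f : form n d) : Prop :=
  f_closure S f /\ ~ f_interior S f.

(* A real polynomial in the coefficients f_alpha, given as a finite sum of
   K monomials: phi(f) = sum_k c_k prod_alpha f_alpha^(e_k alpha). *)
Definition coeff_poly n d (K : nat) (c : 'I_K -> R)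
    (e : 'I_K -> mon n d -> nat) (f : form n d) : R :=
  \big[Rplus/0%R]_(k : 'I_K)
     Rmult (c k) (\big[Rmult/1%R]_(a : mon n d) pow (f a) (e k a)).

Definition sym_mx (m : nat) (A : 'I_m -> 'I_m -> R) : Prop :=
  forall i j, A i j = A j i.

Definition quad_form (m : nat) (A : 'I_m -> 'I_m -> R) (v : 'I_m -> R) : R :=
  \big[Rplus/0%R]_(i : 'I_m) \big[Rplus/0%R]_(j : 'I_m) Rmult (v i) (Rmult (A i j) (v j)).

Definition psd_mx (m : nat) (A : 'I_m -> 'I_m -> R) : Prop :=
  forall v : 'I_m -> R, (0 <= quad_form A v)%R.

Definition pd_mx (m : nat) (A : 'I_m -> 'I_m -> R) : Prop :=
  forall v : 'I_m -> R, (exists i, v i <> 0%R) -> (0 < quad_form A v)%R.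

Definition pencil n d (m : nat) (A : mon n d -> 'I_m -> 'I_m -> R)
    (f : form n d) : 'I_m -> 'I_m -> R :=
  fun i j => \big[Rplus/0%R]_(a : mon n d) Rmult (f a) (A a i j).

(* For r in R let f_r = (x^2 - r y^2)^2 (x^k + y^k) + sum_{i >= 3} x_i^d with
   d = k + 4; its coefficients are polynomials in r.  For r > 0 the form f_r is
   nonnegative and vanishes at (sqrt r, 1, 0, ..., 0), where y^d does not, so
   f_r - s y^d leaves P_{n,d} for every s > 0: f_r lies on the boundary.  The
   form f_{-1} dominates sum_i x_i^d and hence lies in the interior.

   If phi vanishes on the boundary, r |-> phi(f_r) is a polynomial vanishing on
   (0, oo), hence identically, so phi(f_{-1}) = 0 although f_{-1} is interior.
   For a spectrahedral description by a pencil L, take phi = det L: for r > 0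
   the matrix L(f_r) is positive semidefinite, and it cannot be definite, since
   a definite matrix dominates s A_{y^d} for some s > 0 (Schur complements),
   which would make f_r - s y^d nonnegative.  So det L(f_r) = 0, while
   det L(f_{-1}) <> 0. *)

From mathcomp Require Import all_boot all_order ssralg ssrnum poly matrix.
From mathcomp Require Import Rstruct.
From Stdlib Require Import Reals Lra Psatz Classical FunctionalExtensionality.

Set Implicit Arguments.
Unset Strict Implicit.
Unset Printing Implicit Defensive.

Import Order.TTheory Num.Theory.

Open Scope R_scope.

Section PolynomialFunctions.
Local Open Scope ring_scope.

Definition polyfun (g : R -> R) : Prop := exists p : {poly R}, forall t, g t = p.[t].

Lemma polyfun_ext (g h : R -> R) : g =1 h -> polyfun g -> polyfun h.
Proof. by move=> gh [p Hp]; exists p => t; rewrite -gh. Qed.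

Lemma polyfun_cst (c : R) : polyfun (fun _ => c).
Proof. by exists c%:P => t; rewrite hornerC. Qed.

Lemma polyfun_id : polyfun (fun t => t).
Proof. by exists 'X => t; rewrite hornerX. Qed.

Lemma polyfun_add (g h : R -> R) :
  polyfun g -> polyfun h -> polyfun (fun t => (g t + h t)%R).
Proof. by move=> [p Hp] [q Hq]; exists (p + q) => t; rewrite hornerD Hp Hq. Qed.

Lemma polyfun_mul (g h : R -> R) :
  polyfun g -> polyfun h -> polyfun (fun t => (g t * h t)%R).
Proof. by move=> [p Hp] [q Hq]; exists (p * q) => t; rewrite hornerM Hp Hq. Qed.

Lemma polyfun_pow (g : R -> R) (k : nat) : polyfun g -> polyfun (fun t => (g t ^ k)%R).
Proof.
move=> Hg; elim: k => [|k IHk]; [exact: polyfun_cst | exact: polyfun_mul].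
Qed.

Lemma polyfun_big (I : Type) (s : seq I) (P : pred I) (F : I -> R -> R)
    (op : R -> R -> R) (idx : R) :
  (forall g h, polyfun g -> polyfun h -> polyfun (fun t => op (g t) (h t))) ->
  (forall i, polyfun (F i)) ->
  polyfun (fun t => \big[op/idx]_(i <- s | P i) F i t).
Proof.
move=> Hop HF; elim: s => [|i s IHs].
  by apply: (polyfun_ext _ (polyfun_cst idx)) => t; rewrite big_nil.
case Pi: (P i).
  by apply: (polyfun_ext _ (Hop _ _ (HF i) IHs)) => t; rewrite big_cons Pi.
by apply: (polyfun_ext _ IHs) => t; rewrite big_cons Pi.
Qed.

(* A nonzero [p] cannot vanish at all of 1, 2, ..., size p. *)
Lemma polyfun_eq0 (g : R -> R) :
  polyfun g -> (forall t, 0 < t -> g t = 0)%R -> forall t, (g t = 0)%R.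
Proof.
move=> [p Hp] g0 t; rewrite Hp.
suff -> : p = 0 by rewrite horner0.
apply/eqP/contraT => p_neq0.
have := @max_poly_roots _ p (mkseq (fun i => i.+1%:R) (size p)) p_neq0.
rewrite size_mkseq ltnn /mkseq; apply.
  apply/allP => _ /mapP [i _ ->]; apply/eqP; rewrite -Hp g0 // -INRE.
  by apply: lt_0_INR; apply/ssrnat.ltP.
by rewrite map_inj_uniq ?iota_uniq // => i j /eqP; rewrite eqr_nat eqSS => /eqP.
Qed.

End PolynomialFunctions.

Lemma sum_delta_l (T : finType) (b : T) (F : T -> R) :
  \big[Rplus/0]_(a : T) ((if a == b then 1 else 0) * F a) = F b.
Proof. by rewrite (bigD1 b) //= eqxx big1 => [|a /negbTE ->]; ring. Qed.

Lemma sum_delta_r (T : finType) (b : T) (F : T -> R) :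
  \big[Rplus/0]_(a : T) (F a * (if a == b then 1 else 0)) = F b.
Proof. by rewrite -(sum_delta_l b F); apply: eq_bigr => a _; ring. Qed.

Lemma sum_ge0 (I : Type) (s : seq I) (P : pred I) (F : I -> R) :
  (forall i, P i -> 0 <= F i) -> 0 <= \big[Rplus/0]_(i <- s | P i) F i.
Proof. by move=> F_ge0; apply: big_ind => //; [lra | move=> x y; lra]. Qed.

Lemma sum_add_scale (T : finType) (F G : T -> R) c :
  \big[Rplus/0]_(a : T) (F a + c * G a) =
  \big[Rplus/0]_(a : T) F a + c * \big[Rplus/0]_(a : T) G a.
Proof. by rewrite big_split /= -big_distrr. Qed.

Lemma sum_le_compat (I : Type) (s : seq I) (P : pred I) (F G : I -> R) :
  (forall i, P i -> F i <= G i) ->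
  \big[Rplus/0]_(i <- s | P i) F i <= \big[Rplus/0]_(i <- s | P i) G i.
Proof.
by move=> FG; apply: (big_ind2 (fun x y => x <= y)) => //; [lra | move=> *; lra].
Qed.

Lemma prod_le_compat (I : Type) (s : seq I) (P : pred I) (F G : I -> R) :
  (forall i, P i -> 0 <= F i <= G i) ->
  \big[Rmult/1]_(i <- s | P i) F i <= \big[Rmult/1]_(i <- s | P i) G i.
Proof.
move=> FG.
suff [] : 0 <= \big[Rmult/1]_(i <- s | P i) F i <= \big[Rmult/1]_(i <- s | P i) G i by [].
apply: (big_ind2 (fun x y => 0 <= x <= y)) => //; first lra.
move=> x1 x2 y1 y2 [? ?] [? ?]; split; [nra | exact: Rmult_le_compat].
Qed.

Lemma Rabs_sum_le (I : Type) (s : seq I) (P : pred I) (F : I -> R) :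
  Rabs (\big[Rplus/0]_(i <- s | P i) F i) <= \big[Rplus/0]_(i <- s | P i) Rabs (F i).
Proof.
apply: (big_ind2 (fun x y => Rabs x <= y)); [by rewrite Rabs_R0; lra | | move=> *; lra].
by move=> x1 x2 y1 y2 ? ?; apply: Rle_trans (Rabs_triang _ _) _; lra.
Qed.

Lemma sum_ge_term (T : finType) (b : T) (F : T -> R) :
  (forall a, 0 <= F a) -> F b <= \big[Rplus/0]_(a : T) F a.
Proof.
move=> F_ge0; rewrite (bigD1 b) //=.
have := @sum_ge0 _ (index_enum T) (fun a => a != b) F (fun a _ => F_ge0 a); lra.
Qed.

Lemma pow_even_ge0 (x : R) (k : nat) : ~~ odd k -> 0 <= x ^ k.
Proof.
move=> k_even; rewrite -(odd_double_half k) (negbTE k_even) add0n.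
elim: k./2 => [|m IHm]; first by simpl; lra.
by rewrite doubleS /=; nra.
Qed.

Lemma exists_argmax (I : finType) (F : I -> R) (i0 : I) : exists i, forall j, F j <= F i.
Proof.
case: (arg_maxP F (isT : xpredT i0)) => i _ Fi; exists i => j.
exact/RleP/Fi.
Qed.

Section Forms.
Variables n d : nat.
Implicit Types (f g : form n d) (a b : mon n d) (u : 'I_n -> R).

Definition monomial a u : R := \big[Rmult/1]_(i : 'I_n) u i ^ mexp a i.

Lemma eval_formE f u : eval_form f u = \big[Rplus/0]_a (f a * monomial a u).
Proof. by []. Qed.

Definition delta b : form n d := fun a => if a == b then 1 else 0.
Definition fadd f g : form n d := fun a => f a + g a.
Definition fscale (c : R) f : form n d := fun a => c * f a.

Lemma eval_delta b u : eval_form (delta b) u = monomial b u.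
Proof. exact: sum_delta_l. Qed.

Lemma eval_fadd f g u : eval_form (fadd f g) u = eval_form f u + eval_form g u.
Proof. by rewrite !eval_formE -big_split /=; apply: eq_bigr => a _; rewrite /fadd; ring. Qed.

Lemma eval_fscale c f u : eval_form (fscale c f) u = c * eval_form f u.
Proof. by rewrite !eval_formE big_distrr /=; apply: eq_bigr => a _; rewrite /fscale; ring. Qed.

Lemma eval_fsum (I : finType) (P : pred I) (F : I -> form n d) u :
  eval_form (fun a => \big[Rplus/0]_(i | P i) F i a) u =
  \big[Rplus/0]_(i | P i) eval_form (F i) u.
Proof.
rewrite eval_formE; under eq_bigr => a _ do rewrite big_distrl.
by rewrite exchange_big.
Qed.

Lemma dist_fadd_delta f b c : dist_form f (fadd f (fscale c (delta b))) = Rabs c.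
Proof.
rewrite /dist_form -(sqrt_pow2 (Rabs c) (Rabs_pos c)) pow2_abs.
rewrite -(sum_delta_r b (fun _ => c ^ 2)).
by congr sqrt; apply: eq_bigr => a _; rewrite /fadd /fscale /delta; case: (a == b); ring.
Qed.

Lemma Rabs_coef_le_dist f g a : Rabs (g a - f a) <= dist_form f g.
Proof.
rewrite Rabs_minus_sym -(sqrt_pow2 _ (Rabs_pos (f a - g a))) pow2_abs.
by apply/sqrt_le_1_alt/(sum_ge_term a) => b; apply: pow2_ge_0.
Qed.

Definition power_sum u : R := \big[Rplus/0]_(i : 'I_n) u i ^ d.

Section EvenDegree.
Hypothesis d_even : ~~ odd d.

Lemma power_sum_ge0 u : 0 <= power_sum u.
Proof. by apply: sum_ge0 => i _; apply: pow_even_ge0. Qed.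

(* |u^alpha| <= (max_i |u_i|)^d <= sum_i u_i^d *)
Lemma Rabs_monomial_le (i0 : 'I_n) a u : Rabs (monomial a u) <= power_sum u.
Proof.
have [i u_max] := exists_argmax (fun j => Rabs (u j)) i0.
have -> : Rabs (monomial a u) = \big[Rmult/1]_(j : 'I_n) Rabs (u j) ^ mexp a j.
  rewrite /monomial (big_morph Rabs Rabs_mult Rabs_R1).
  by apply: eq_bigr => j _; rewrite RPow_abs.
apply: Rle_trans (_ : Rabs (u i) ^ d <= _).
  have -> : Rabs (u i) ^ d = \big[Rmult/1]_(j : 'I_n) Rabs (u i) ^ mexp a j.
    rewrite -(big_morph _ (pow_add _) (pow_O _)).
    by congr (_ ^ _); apply/esym/eqP; exact: (proj2_sig a).
  apply: prod_le_compat => j _; split; first exact/pow_le/Rabs_pos.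
  by apply: pow_incr; split; [apply: Rabs_pos | apply: u_max].
rewrite RPow_abs Rabs_pos_eq /power_sum; last exact: pow_even_ge0.
by apply: (sum_ge_term (T := ordinal n)) => j; apply: pow_even_ge0.
Qed.

(* A form dominating [power_sum] is interior: perturbing each of the
   [K] coefficients by less than [1/(K+1)] changes [f(u)] by less than
   [power_sum u]. *)
Lemma dominating_interior (i0 : 'I_n) f :
  (forall u, power_sum u <= eval_form f u) -> f_interior (@Pnd n d) f.
Proof.
move=> f_dom.
set K := \big[Rplus/0]_(a : mon n d) 1.
have K_ge0 : 0 <= K by apply: sum_ge0 => a _; lra.
have eps_gt0 : 0 < 1 / (K + 1) by apply: Rdiv_lt_0_compat; lra.
have eps_K : 1 / (K + 1) * K <= 1.
  by apply: (Rmult_le_reg_l (K + 1)); [lra | field_simplify; lra].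
exists (1 / (K + 1)); split => // g dist_fg u.
set err := \big[Rplus/0]_a ((g a - f a) * monomial a u).
have -> : eval_form g u = eval_form f u + err.
  by rewrite !eval_formE -big_split /=; apply: eq_bigr => a _; ring.
have err_le : Rabs err <= 1 / (K + 1) * K * power_sum u.
  apply: Rle_trans (Rabs_sum_le _ _ _) _.
  have -> : 1 / (K + 1) * K * power_sum u =
            \big[Rplus/0]_(a : mon n d) (1 / (K + 1) * power_sum u * 1).
    by rewrite -big_distrr /= -/K; ring.
  apply: sum_le_compat => a _; rewrite Rabs_mult Rmult_1_r.
  apply: Rmult_le_compat; try exact: Rabs_pos; last exact: Rabs_monomial_le.
  by have := Rabs_coef_le_dist f g a; lra.
have := f_dom u; have := Rle_abs (- err); rewrite Rabs_Ropp.
have := Rmult_le_compat_r _ _ _ (power_sum_ge0 u) eps_K; lra.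
Qed.

End EvenDegree.

Definition mon2_exp (i j : 'I_n) (p q : nat) (l : 'I_n) : nat :=
  ((l == i) * p + (l == j) * q)%nat.

Lemma mon2_exp_le i j p q l : (mon2_exp i j p q l <= p + q)%nat.
Proof.
rewrite /mon2_exp; case: (l == i); case: (l == j);
  by rewrite ?mul0n ?mul1n ?add0n ?addn0 ?leq_addr ?leq_addl.
Qed.

Lemma sum_mon2_exp i j p q : (\sum_(l : 'I_n) mon2_exp i j p q l)%nat = (p + q)%nat.
Proof.
have sum_ind (i' : 'I_n) r : (\sum_(l : 'I_n) (l == i') * r)%nat = r.
  by rewrite (bigD1 i') //= eqxx mul1n big1 ?addn0 // => l /negbTE ->.
by rewrite big_split /= !sum_ind.
Qed.

Definition mon2_ffun (i j : 'I_n) (p q : nat) : {ffun 'I_n -> 'I_d.+1} :=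
  [ffun l => inord (mon2_exp i j p q l)].

Lemma mexp_mon2_ffun i j p q (pq : (p + q)%nat = d) l :
  mon2_ffun i j p q l = mon2_exp i j p q l :> nat.
Proof. by rewrite ffunE inordK // ltnS -pq mon2_exp_le. Qed.

Lemma sum_mon2_ffun i j p q (pq : (p + q)%nat = d) :
  (\sum_(l : 'I_n) mon2_ffun i j p q l)%nat == d.
Proof.
rewrite -[X in _ == X]pq -(sum_mon2_exp i j).
by apply/eqP/eq_bigr => l _; rewrite (mexp_mon2_ffun _ _ pq).
Qed.

Definition mon2 i j p q (pq : (p + q)%nat = d) : mon n d :=
  exist _ (mon2_ffun i j p q) (sum_mon2_ffun i j pq).

Lemma monomial_mon2 i j p q (pq : (p + q)%nat = d) u :
  monomial (mon2 i j pq) u = u i ^ p * u j ^ q.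
Proof.
have prod_ind (i' : 'I_n) r : \big[Rmult/1]_(l : 'I_n) u l ^ ((l == i') * r) = u i' ^ r.
  by rewrite (bigD1 i') //= eqxx mul1n big1 => [|l /negbTE ->]; rewrite /= ?Rmult_1_r.
rewrite /monomial; under eq_bigr => l _ do
  rewrite /mexp /= (mexp_mon2_ffun _ _ pq) /mon2_exp pow_add.
by rewrite big_split /= !prod_ind.
Qed.

End Forms.

Section Family.
Variables n k : nat.
Hypothesis n_ge2 : (2 <= n)%nat.
Hypothesis k_even : ~~ odd k.
Local Notation d := (k + 4)%nat.

Lemma d_even : ~~ odd d.
Proof. by rewrite oddD addbF. Qed.

Definition ix : 'I_n := Ordinal (ltnW n_ge2).
Definition iy : 'I_n := Ordinal n_ge2.

Definition other (i : 'I_n) : bool := (i != ix) && (i != iy).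

Definition ydeg : mon n d := mon2 ix iy (add0n d).

Definition fam (r : R) : form n d :=
  fadd (fadd (fadd (fadd (fadd (fadd
    (delta (mon2 ix iy (addn0 d)))
    (delta (mon2 ix iy (addnC 4%nat k))))
    (fscale (-2 * r) (delta (mon2 ix iy (esym (addnA k 2%nat 2%nat))))))
    (fscale (-2 * r) (delta (mon2 ix iy (addnCA 2%nat k 2%nat)))))
    (fscale (r ^ 2) (delta (mon2 ix iy (p := k) (q := 4%nat) erefl))))
    (fscale (r ^ 2) (delta ydeg)))
    (fun a => \big[Rplus/0]_(i : 'I_n | other i) delta (mon2 i i (addn0 d)) a).

Lemma eval_fam r u : eval_form (fam r) u =
  (u ix ^ 2 - r * u iy ^ 2) ^ 2 * (u ix ^ k + u iy ^ k) +
  \big[Rplus/0]_(i : 'I_n | other i) u i ^ d.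
Proof.
rewrite /fam !eval_fadd !eval_fscale !eval_delta eval_fsum !monomial_mon2.
under eq_bigr => i _ do rewrite eval_delta monomial_mon2 /= Rmult_1_r.
by rewrite !pow_add /=; ring.
Qed.

Lemma Pnd_fam r : Pnd (fam r).
Proof.
move=> u; rewrite eval_fam; apply: Rplus_le_le_0_compat.
  apply: Rmult_le_pos; first exact: pow2_ge_0.
  by apply: Rplus_le_le_0_compat; apply: pow_even_ge0.
by apply: sum_ge0 => i _; apply/pow_even_ge0/d_even.
Qed.

Definition fam_root (r : R) (i : 'I_n) : R :=
  if i == ix then sqrt r else if i == iy then 1 else 0.

Lemma fam_sub_ydeg_not_Pnd r s :
  0 < r -> 0 < s -> ~ Pnd (fadd (fam r) (fscale (- s) (delta ydeg))).
Proof.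
move=> r_gt0 s_gt0 /(_ (fam_root r)).
have iy_ix : (iy == ix) = false by [].
rewrite eval_fadd eval_fscale eval_delta eval_fam monomial_mon2 /fam_root eqxx iy_ix.
rewrite big1 => [|i /andP [/negbTE -> /negbTE ->]]; last by rewrite pow_add /=; ring.
rewrite pow2_sqrt ?pow1; [lra | lra].
Qed.

Lemma fam_boundary r : 0 < r -> f_boundary (@Pnd n d) (fam r).
Proof.
move=> r_gt0; split.
  move=> eps eps_gt0; exists (fam r); split; first exact: Pnd_fam.
  by rewrite /dist_form big1 ?sqrt_0 // => a _; ring.
move=> [eps [eps_gt0 near_Pnd]].
have half_gt0 : 0 < eps / 2 by lra.
apply: (fam_sub_ydeg_not_Pnd r_gt0 half_gt0).
by apply: near_Pnd; rewrite dist_fadd_delta Rabs_Ropp Rabs_pos_eq; lra.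
Qed.

Lemma power_sum_le_fam u : power_sum d u <= eval_form (fam (-1)) u.
Proof.
rewrite /power_sum (bigD1 ix) //= (bigD1 iy) //= (eq_bigl other) // eval_fam !pow_add.
set x := u ix; set y := u iy.
have X_ge0 := pow_even_ge0 x k_even; have Y_ge0 := pow_even_ge0 y k_even.
set X := x ^ k in X_ge0 *; set Y := y ^ k in Y_ge0 *.
have -> : (x ^ 2 - -1 * y ^ 2) ^ 2 * (X + Y) =
          X * x ^ 4 + Y * y ^ 4 + (2 * (x * y) ^ 2 + y ^ 4) * X + (x ^ 4 + 2 * (x * y) ^ 2) * Y.
  by ring.
have xy2 := pow2_ge_0 (x * y).
have x4 := pow_even_ge0 x (isT : ~~ odd 4); have y4 := pow_even_ge0 y (isT : ~~ odd 4).
have := Rmult_le_pos (2 * (x * y) ^ 2 + y ^ 4) X ltac:(lra) X_ge0.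
have := Rmult_le_pos (x ^ 4 + 2 * (x * y) ^ 2) Y ltac:(lra) Y_ge0.
set S := \big[Rplus/0]_(i : 'I_n | other i) _.
lra.
Qed.

Lemma fam_interior : f_interior (@Pnd n d) (fam (-1)).
Proof. exact: (dominating_interior d_even ix power_sum_le_fam). Qed.

Lemma polyfun_fam a : polyfun (fun r => fam r a).
Proof.
rewrite /fam /fadd /fscale.
by repeat first [ apply: polyfun_cst | apply: polyfun_id | apply: polyfun_add
                | apply: polyfun_mul | apply: polyfun_pow ].
Qed.

End Family.

Definition lin (m : nat) (p v : 'I_m -> R) : R := \big[Rplus/0]_(i : 'I_m) (p i * v i).

Definition bilin (m : nat) (M : 'I_m -> 'I_m -> R) (v w : 'I_m -> R) : R :=
  \big[Rplus/0]_(i : 'I_m) \big[Rplus/0]_(j : 'I_m) (v i * (M i j * w j)).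

Definition mx_add_rank1 (m : nat) (M : 'I_m -> 'I_m -> R) (c : R) (p p' : 'I_m -> R) :
    'I_m -> 'I_m -> R :=
  fun i j => M i j + c * (p i * p' j).

Definition unitv (m : nat) (j : 'I_m) : 'I_m -> R := fun i => if i == j then 1 else 0.

Section QuadraticForms.
Variable m : nat.
Implicit Types (M B : 'I_m -> 'I_m -> R) (p v w : 'I_m -> R).

Lemma quad_form_eq0 M v : (forall i, v i = 0) -> quad_form M v = 0.
Proof.
by move=> v0; rewrite /quad_form big1 // => i _; rewrite big1 // => j _; rewrite v0; ring.
Qed.

Lemma lin_addl p p' v c : lin (fun i => p i + c * p' i) v = lin p v + c * lin p' v.
Proof. by rewrite /lin big_distrr -big_split /=; apply: eq_bigr => i _; ring. Qed.

Lemma quad_form_add_scale M v w c :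
  quad_form M (fun i => v i + c * w i) =
  quad_form M v + c * (bilin M v w + bilin M w v) + c ^ 2 * quad_form M w.
Proof.
rewrite /quad_form /bilin -big_split /= -!sum_add_scale; apply: eq_bigr => i _.
by rewrite -big_split /= -!sum_add_scale; apply: eq_bigr => j _; ring.
Qed.

Lemma quad_form_add_rank1 M p p' v c :
  quad_form (mx_add_rank1 M c p p') v =
  quad_form M v + c * lin p v * lin p' v.
Proof.
rewrite /quad_form /lin Rmult_assoc big_distrl -sum_add_scale; apply: eq_bigr => i _.
by rewrite /= big_distrr /= -sum_add_scale; apply: eq_bigr => j _; rewrite /mx_add_rank1; ring.
Qed.

Lemma quad_form_sub_scale M B v s :
  quad_form (fun i j => M i j - s * B i j) v = quad_form M v - s * quad_form B v.
Proof.
rewrite /quad_form /Rminus Ropp_mult_distr_l -sum_add_scale; apply: eq_bigr => i _.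
by rewrite -sum_add_scale; apply: eq_bigr => j _; ring.
Qed.

Lemma quad_form_unitv M j : quad_form M (unitv j) = M j j.
Proof.
rewrite /quad_form /unitv; under eq_bigr => i _ do rewrite -big_distrr.
by rewrite sum_delta_l sum_delta_r.
Qed.

Lemma pd_psd M : pd_mx M -> psd_mx M.
Proof.
move=> M_pd v; case: (classic (exists i, v i <> 0)) => [v_neq0 | v0].
  exact/Rlt_le/M_pd.
rewrite quad_form_eq0; first lra.
by move=> i; apply: NNPP => vi; apply: v0; exists i.
Qed.

Lemma pd_diag_gt0 M j : pd_mx M -> 0 < M j j.
Proof.
move=> M_pd; rewrite -quad_form_unitv; apply: M_pd.
by exists j; rewrite /unitv eqxx; lra.
Qed.

Lemma linear_coef_eq0 (X Y : R) : (forall t, 0 <= t * X + t ^ 2 * Y) -> X = 0.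
Proof.
move=> quad_ge0; set D := Rabs Y + 1.
have D_gt0 : 0 < D by have := Rabs_pos Y; rewrite /D; lra.
have YD : Y - D <= -1 by have := Rle_abs Y; rewrite /D; lra.
have := quad_ge0 (- X / D).
have -> : - X / D * X + (- X / D) ^ 2 * Y = X ^ 2 * (Y - D) / D ^ 2 by field; lra.
move=> ge0; have : 0 <= X ^ 2 * (Y - D).
  have := Rmult_le_pos _ _ ge0 (pow2_ge_0 D).
  by rewrite /Rdiv Rmult_assoc Rinv_l ?Rmult_1_r //; apply: pow_nonzero; lra.
by move=> ?; apply: Rsqr_0_uniq; rewrite Rsqr_pow2; have := pow2_ge_0 X; nra.
Qed.

Lemma psd_isotropic_kernel M v :
  sym_mx M -> psd_mx M -> quad_form M v = 0 ->
  forall j, \big[Rplus/0]_(i : 'I_m) (v i * M i j) = 0.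
Proof.
move=> M_sym M_psd qv0 j; set X := \big[Rplus/0]_(i : 'I_m) (v i * M i j).
have bil_vj : bilin M v (unitv j) = X.
  rewrite /bilin /unitv; apply: eq_bigr => i _.
  by under eq_bigr => l _ do rewrite -Rmult_assoc; rewrite sum_delta_r.
have bil_jv : bilin M (unitv j) v = X.
  rewrite /bilin /unitv; under eq_bigr => i _ do rewrite -big_distrr.
  by rewrite sum_delta_l; apply: eq_bigr => i _; rewrite M_sym Rmult_comm.
suff : 2 * X = 0 by lra.
apply: (linear_coef_eq0 (Y := M j j)) => t.
have := M_psd (fun i => v i + t * unitv j i).
by rewrite quad_form_add_scale bil_vj bil_jv quad_form_unitv qv0; lra.
Qed.

End QuadraticForms.

Section LastCoordinate.
Variable m : nat.
Implicit Types (M B : 'I_m.+1 -> 'I_m.+1 -> R) (v : 'I_m.+1 -> R).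
Local Notation top := (widen_ord (leqnSn m)).
Local Notation last := (@ord_max m).

Definition mx_top M : 'I_m -> 'I_m -> R := fun i j => M (top i) (top j).
Definition mx_last_col M : 'I_m -> R := fun i => (M (top i) last + M last (top i)) / 2.
Definition vec_top v : 'I_m -> R := fun i => v (top i).
Definition vec_ext (w : 'I_m -> R) (x : R) : 'I_m.+1 -> R :=
  fun i => if unlift last i is Some i' then w i' else x.

Lemma vec_ext_top w x i : vec_ext w x (top i) = w i.
Proof.
have -> : top i = lift last i by apply: val_inj; rewrite /= /bump leqNgt ltn_ord.
by rewrite /vec_ext liftK.
Qed.

Lemma vec_top_ext w x : vec_top (vec_ext w x) = w.
Proof. by apply: functional_extensionality => i; apply: vec_ext_top. Qed.

Lemma vec_ext_last w x : vec_ext w x last = x.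
Proof. by rewrite /vec_ext unlift_none. Qed.

Lemma quad_form_last M v :
  quad_form M v = quad_form (mx_top M) (vec_top v) +
    2 * v last * lin (mx_last_col M) (vec_top v) + M last last * v last ^ 2.
Proof.
rewrite /quad_form big_ord_recr /= big_ord_recr /=.
under eq_bigr => i _ do rewrite big_ord_recr /=.
rewrite big_split /= /lin /mx_top /vec_top.
have E : \big[Rplus/0]_(i < m) (v (top i) * (M (top i) last * v last)) +
          \big[Rplus/0]_(i < m) (v last * (M last (top i) * v (top i))) =
          2 * v last * \big[Rplus/0]_(i < m) (mx_last_col M i * v (top i)).
  by rewrite big_distrr -big_split /=; apply: eq_bigr => i _; rewrite /mx_last_col; field.
rewrite -E /=; ring.
Qed.

Definition schur M : 'I_m -> 'I_m -> R :=
  mx_add_rank1 (mx_top M) (-1 / M last last) (mx_last_col M) (mx_last_col M).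

Lemma quad_form_schur M v : M last last <> 0 ->
  quad_form M v = M last last * (v last + lin (mx_last_col M) (vec_top v) / M last last) ^ 2
                  + quad_form (schur M) (vec_top v).
Proof. by move=> a_neq0; rewrite quad_form_last /schur quad_form_add_rank1; field. Qed.

Lemma pd_schur M : pd_mx M -> pd_mx (schur M).
Proof.
move=> M_pd w [i wi_neq0].
have a_gt0 := pd_diag_gt0 last M_pd.
set v := vec_ext w (- lin (mx_last_col M) w / M last last).
have := M_pd v; rewrite quad_form_schur /v ?vec_top_ext ?vec_ext_last; last lra.
set L := lin (mx_last_col M) w.
have -> : (- L / M last last + L / M last last) ^ 2 = 0 by field; lra.
rewrite Rmult_0_r Rplus_0_l; apply.
by exists (top i); rewrite vec_ext_top.
Qed.

(* Chosen so that q_B(v) <= (|B_mm| + 1) y^2 + q_{dom_mx}(v') when q_M(v) is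
   written as a y^2 + q_{schur M}(v') (see quad_form_le_dom). *)
Definition dom_mx B (b : 'I_m -> R) (a : R) : 'I_m -> 'I_m -> R :=
  let beta := B last last in let c := mx_last_col B in
  mx_add_rank1 (mx_add_rank1 (mx_add_rank1 (mx_top B) (-2 / a) b c) (beta / a ^ 2) b b)
    1 (fun i => c i + (- beta / a) * b i) (fun i => c i + (- beta / a) * b i).

Lemma quad_form_le_dom B b a v : a <> 0 ->
  quad_form B v <= (Rabs (B last last) + 1) * (v last + lin b (vec_top v) / a) ^ 2
                   + quad_form (dom_mx B b a) (vec_top v).
Proof.
move=> a_neq0; rewrite quad_form_last /dom_mx !quad_form_add_rank1 lin_addl.
set beta := B last last; set L1 := lin b _; set L2 := lin (mx_last_col B) _.
set y := v last + L1 / a; set D := L2 + - beta / a * L1.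
set Q := quad_form (mx_top B) _.
have -> : Q + 2 * v last * L2 + beta * v last ^ 2 =
          beta * y ^ 2 + 2 * y * D + (Q + -2 / a * L1 * L2 + beta / a ^ 2 * L1 * L1).
  by rewrite /y /D; field.
have := Rmult_le_compat_r (y ^ 2) _ _ (pow2_ge_0 y) (Rle_abs beta).
have := pow2_ge_0 (y - D); nra.
Qed.

End LastCoordinate.

(* Induction on m: complete the square in the last coordinate, then use the
   induction hypothesis for the Schur complement and [dom_mx]. *)
Lemma pd_dominates m (M B : 'I_m -> 'I_m -> R) :
  pd_mx M -> exists s, 0 < s /\ forall v, s * quad_form B v <= quad_form M v.
Proof.
elim: m M B => [|m IHm] M B M_pd.
  by exists 1; split => [|v]; rewrite /quad_form ?big_ord0; lra.
set a := M ord_max ord_max; have a_gt0 : 0 < a by apply: pd_diag_gt0.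
have [s' [s'_gt0 dom_le]] := IHm (schur M) (dom_mx B (mx_last_col M) a) (pd_schur M_pd).
set beta1 := Rabs (B ord_max ord_max) + 1.
have beta1_gt0 : 0 < beta1 by have := Rabs_pos (B ord_max ord_max); rewrite /beta1; lra.
set s := Rmin s' (a / beta1).
have s_gt0 : 0 < s by apply: Rmin_pos => //; apply: Rdiv_lt_0_compat.
have s_le : s <= s' := Rmin_l _ _.
have s_beta1 : s * beta1 <= a.
  have := Rmult_le_compat_r _ _ _ (Rlt_le _ _ beta1_gt0) (Rmin_r s' (a / beta1)).
  by rewrite /Rdiv Rmult_assoc Rinv_l ?Rmult_1_r //; lra.
exists s; split => // v.
have := quad_form_le_dom B (mx_last_col M) v (Rgt_not_eq _ _ a_gt0).
rewrite (quad_form_schur v (Rgt_not_eq _ _ a_gt0)) -/a.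
have := pd_psd (pd_schur M_pd) (vec_top v); have := dom_le (vec_top v).
set y := _ + _ / a; set Q := quad_form (dom_mx _ _ _) _; set S := quad_form (schur M) _.
move=> sQ_le S_ge0 qB_le.
have sQ : s * Q <= S.
  case: (Rle_dec 0 Q) => [Q_ge0 | Q_lt0]; last nra.
  by apply: Rle_trans sQ_le; apply: Rmult_le_compat_r.
have := Rmult_le_compat_r _ _ _ (pow2_ge_0 y) s_beta1.
have := Rmult_le_compat_l _ _ _ (Rlt_le _ _ s_gt0) qB_le; rewrite -/beta1.
nra.
Qed.

Definition mx_of_fun (m : nat) (M : 'I_m -> 'I_m -> R) : 'M[R]_m := \matrix_(i, j) M i j.

Definition row_of_fun (m : nat) (v : 'I_m -> R) : 'M[R]_(1, m) := \matrix_(i, j) v j.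

Lemma det_pd_neq0 m (M : 'I_m -> 'I_m -> R) : pd_mx M -> determinant (mx_of_fun M) <> 0.
Proof.
move=> M_pd /eqP/det0P [v v_neq0 vM0].
have v_ker j : \big[Rplus/0]_(i : 'I_m) (v ord0 i * M i j) = 0.
  have := congr1 (fun X : 'M[R]_(1, m) => X ord0 j) vM0; rewrite !mxE.
  by under eq_bigr => i _ do rewrite mxE.
have : exists i, v ord0 i <> 0.
  apply: NNPP => v0; move/eqP: v_neq0; apply; apply/rowP => i; rewrite mxE.
  by apply: NNPP => vi; apply: v0; exists i.
move/M_pd; rewrite /quad_form exchange_big big1 /= => [|j _]; first lra.
by under eq_bigr => i _ do rewrite -Rmult_assoc; rewrite -big_distrl /= v_ker Rmult_0_l.
Qed.

Lemma det_psd_not_pd m (M : 'I_m -> 'I_m -> R) :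
  sym_mx M -> psd_mx M -> ~ pd_mx M -> determinant (mx_of_fun M) = 0.
Proof.
move=> M_sym M_psd M_not_pd.
have [v [[i vi_neq0] qv0]] : exists v, (exists i, v i <> 0) /\ quad_form M v = 0.
  apply: NNPP => no_v; apply: M_not_pd => v v_neq0.
  case: (Rle_lt_or_eq_dec _ _ (M_psd v)) => // qv0.
  by case: no_v; exists v.
apply/eqP/det0P; exists (row_of_fun v).
  by apply/eqP => /rowP /(_ i); rewrite !mxE.
apply/rowP => j; rewrite !mxE.
rewrite -[RHS](psd_isotropic_kernel M_sym M_psd qv0 j).
by apply: eq_bigr => l _; rewrite !mxE.
Qed.

Lemma polyfun_coeff_poly n d K (c : 'I_K -> R) (e : 'I_K -> mon n d -> nat)
    (F : R -> form n d) :
  (forall a, polyfun (fun r => F r a)) -> polyfun (fun r => coeff_poly c e (F r)).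
Proof.
move=> F_poly; apply: polyfun_big => [|k]; first exact: polyfun_add.
apply/polyfun_mul/polyfun_big => [||a]; [exact: polyfun_cst | exact: polyfun_mul |].
exact: polyfun_pow.
Qed.

Lemma polyfun_pencil n d m (A : mon n d -> 'I_m -> 'I_m -> R) (F : R -> form n d) i j :
  (forall a, polyfun (fun r => F r a)) -> polyfun (fun r => pencil A (F r) i j).
Proof.
move=> F_poly; apply: polyfun_big => [|a]; first exact: polyfun_add.
exact/polyfun_mul/polyfun_cst.
Qed.

Lemma polyfun_det m (M : R -> 'I_m -> 'I_m -> R) :
  (forall i j, polyfun (fun r => M r i j)) -> polyfun (fun r => determinant (mx_of_fun (M r))).
Proof.
move=> M_poly; apply: polyfun_big => [|s]; first exact: polyfun_add.
apply/polyfun_mul/polyfun_big => [||i]; [exact: polyfun_cst | exact: polyfun_mul |].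
by apply: polyfun_ext (M_poly i _) => r; rewrite mxE.
Qed.

Lemma pencil_sub_delta n d m (A : mon n d -> 'I_m -> 'I_m -> R) f b s :
  pencil A (fadd f (fscale (- s) (delta b))) = fun i j => pencil A f i j - s * A b i j.
Proof.
apply: functional_extensionality => i; apply: functional_extensionality => j.
rewrite /pencil /fadd /fscale /delta -(sum_delta_l b (fun a => A a i j)).
by rewrite /Rminus Ropp_mult_distr_l -sum_add_scale; apply: eq_bigr => a _; ring.
Qed.

Section NoBarrier.
Variables n k : nat.
Hypothesis n_ge2 : (2 <= n)%nat.
Hypothesis k_even : ~~ odd k.
Local Notation d := (k + 4)%nat.

Lemma no_polynomial_barrier :
  ~ exists (K : nat) (c : 'I_K -> R) (e : 'I_K -> mon n d -> nat),
      (forall f : form n d, f_interior (@Pnd n d) f -> 0 < coeff_poly c e f) /\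
      (forall f : form n d, f_boundary (@Pnd n d) f -> coeff_poly c e f = 0).
Proof.
move=> [K [c [e [int_pos bd_zero]]]].
have phi_poly := polyfun_coeff_poly c e (polyfun_fam n_ge2).
have phi0 : coeff_poly c e (fam n_ge2 (-1)) = 0.
  exact: polyfun_eq0 phi_poly (fun r r_gt0 => bd_zero _ (fam_boundary n_ge2 k_even r_gt0)) (-1).
by have := int_pos _ (fam_interior n_ge2 k_even); lra.
Qed.

Lemma no_lmi_representation :
  ~ exists (m : nat) (A : mon n d -> 'I_m -> 'I_m -> R),
      (forall a, sym_mx (A a)) /\
      (forall f : form n d, Pnd f <-> psd_mx (pencil A f)) /\
      (forall f : form n d, f_interior (@Pnd n d) f -> pd_mx (pencil A f)).
Proof.
move=> [m [A [A_sym [Pnd_psd int_pd]]]].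
have L_sym f : sym_mx (pencil A f) by move=> i j; apply: eq_bigr => a _; rewrite A_sym.
have det_fam0 r : 0 < r -> determinant (mx_of_fun (pencil A (fam n_ge2 r))) = 0.
  move=> r_gt0; apply: det_psd_not_pd; [exact: L_sym | exact/Pnd_psd/Pnd_fam |].
  move=> /(pd_dominates (A (ydeg k n_ge2))) [s [s_gt0 dom]].
  apply: (@fam_sub_ydeg_not_Pnd n k n_ge2 r s r_gt0 s_gt0); apply/Pnd_psd.
  by rewrite pencil_sub_delta => v; rewrite quad_form_sub_scale; have := dom v; lra.
have det_poly := polyfun_det (fun i j => polyfun_pencil A i j (polyfun_fam n_ge2)).
apply: det_pd_neq0 (int_pd _ (fam_interior n_ge2 k_even)) _.
exact: polyfun_eq0 det_poly det_fam0 (-1).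
Qed.

End NoBarrier.

Close Scope R_scope.

Theorem mainTheorem6 (n d : nat) (hd : (2 < d)%N) (hdeven : ~~ odd d)
    (hn : (2 <= n)%N) :
  (~ exists (K : nat) (c : 'I_K -> R) (e : 'I_K -> mon n d -> nat),
       (forall f : form n d, f_interior (@Pnd n d) f -> (0 < coeff_poly c e f)%R) /\
       (forall f : form n d, f_boundary (@Pnd n d) f -> coeff_poly c e f = 0%R))
  /\
  (~ exists (m : nat) (A : mon n d -> 'I_m -> 'I_m -> R),
       (forall a, sym_mx (A a)) /\
       (forall f : form n d, Pnd f <-> psd_mx (pencil A f)) /\
       (forall f : form n d, f_interior (@Pnd n d) f -> pd_mx (pencil A f))).
Proof.
have d_ge4 : (4 <= d)%N by move: hd hdeven; case: d => [|[|[|[|d']]]].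
have -> : d = (d - 4 + 4)%N by rewrite subnK.
have k_even : ~~ odd (d - 4) by move: hdeven; rewrite -{1}(subnK d_ge4) oddD addbF.
split; [exact: no_polynomial_barrier | exact: no_lmi_representation].
Qed.
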